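(* For the decorated combinatorial tiling $K$ one has $\omega(K)\cong K$, but for every vertex $v$ of $K$ the pointed tilings $(\omega(K),v)$ and $(K,v)$ are not isomorphic.
   Context: Decorated subdivision: a decorated pentagon has boundary vertices $v_1,\dots,v_5$ in cyclic order (indices mod 5), corner $v_i$ labelled $i$; $\omega$ adds $m_i$ inside edge $v_iv_{i+1}$, interior vertices $c_1,\dots,c_5$, edges $c_ic_{i+1}$, $c_im_i$, and replaces the face by the central pentagon $c_1\cdots c_5$ (label $i+1$ at $c_i$) and petals $v_i\,m_i\,c_i\,c_{i-1}\,m_{i-1}$ labelled $i,i+1,i+2,i+3,i+4$ (mod 5). $K_0$ is one decorated pentagon, $K_n=\omega^n(K_0)$ embeds label-preservingly onto the central superpentagon $\omega^n(\text{central face of }\omega(K_0))$ of $K_{n+1}$, and $K$ is the direct limit (a 2-dimensional CW-complex homeomorphic to the open disk). $\omega(K)$ is obtained by applying $\omega$ to every face of $K$; each vertex $v$ of $K$ is also a vertex of $\omega(K)$. Isomorphisms are cell-preserving, label-preserving bijections; an isomorphism of pointed tilings $(L,u)\to(L',u')$ must send $u$ to $u'$. *)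

From Stdlib Require Import ClassicalEpsilon.
From mathcomp Require Import all_boot.
Set Implicit Arguments. Unset Strict Implicit. Unset Printing Implicit Defensive.

(* Every face is a pentagon whose corners carry the labels 0..4 (the paper's *)
(* labels 1..5, shifted by one), the corner labelled i+1 following the      *)
(* corner labelled i in the cyclic boundary order.                          *)
(*   side f i   : the edge of f joining corner i to corner i+1 (mod 5)       *)
(*   sdir f i   : bookkeeping bit: true iff                                 *)
(*                ends (side f i) = (corner f i, corner f (i+1)).           *)
Record pcx := PCX {
  vtx : Type; edg : Type; fac : Type;
  ends : edg -> vtx * vtx;
  corner : fac -> 'I_5 -> vtx;
  side : fac -> 'I_5 -> edg;
  sdir : fac -> 'I_5 -> bool }.

Definition succ5 (i : 'I_5) : 'I_5 := @ordS 5 i.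
Definition pred5 (i : 'I_5) : 'I_5 := @ord_pred 5 i.

(* New vertices: old vertices OV v, midpoints OM e (one per edge, shared by *)
(* both faces containing e), and interior vertices OC f i = c_i of face f.  *)
Inductive ovtx (X : pcx) : Type :=
  | OV of vtx X | OM of edg X | OC of fac X & 'I_5.
(* OH e b: the half of e from its endpoint (if b then snd else fst) to m_e;
   OS f i: the edge c_i m_i; OR f i: the edge c_i c_{i+1}. *)
Inductive oedg (X : pcx) : Type :=
  | OH of edg X & bool | OS of fac X & 'I_5 | OR of fac X & 'I_5.
(* OZ f: central pentagon of f; OP f i: petal v_i m_i c_i c_{i-1} m_{i-1}. *)
Inductive ofac (X : pcx) : Type :=
  | OZ of fac X | OP of fac X & 'I_5.

Section Omega.
Variable X : pcx.

Definition om_ends (e : oedg X) : ovtx X * ovtx X :=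
  match e with
  | OH e b => (OV (X:=X) (if b then (ends e).2 else (ends e).1), OM (X:=X) e)
  | OS f i => (OM (X:=X) (side f i), OC f i)
  | OR f i => (OC f i, OC f (succ5 i))
  end.

(* position k (0..4) of label j in the petal starting at label i *)
Definition rel5 (j i : 'I_5) : nat := (j + 5 - i) %% 5.

Definition om_corner (F : ofac X) (j : 'I_5) : ovtx X :=
  match F with
  | OZ f => OC f (pred5 j)
  | OP f i =>
      match rel5 j i with
      | 0 => OV (X:=X) (corner f i)
      | 1 => OM (X:=X) (side f i)
      | 2 => OC f i
      | 3 => OC f (pred5 i)
      | _ => OM (X:=X) (side f (pred5 i))
      end
  end.

Definition om_side (F : ofac X) (j : 'I_5) : oedg X :=
  match F with
  | OZ f => OR f (pred5 j)
  | OP f i =>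
      match rel5 j i with
      | 0 => OH (side f i) (~~ sdir f i)
      | 1 => OS f i
      | 2 => OR f (pred5 i)
      | 3 => OS f (pred5 i)
      | _ => OH (side f (pred5 i)) (sdir f (pred5 i))
      end
  end.

Definition om_sdir (F : ofac X) (j : 'I_5) : bool :=
  match F with
  | OZ f => true
  | OP f i => (rel5 j i <= 1)%N
  end.

Definition om : pcx := @PCX (ovtx X) (oedg X) (ofac X) om_ends om_corner om_side om_sdir.
End Omega.

Record hom (X Y : pcx) := Hom {
  hV : vtx X -> vtx Y; hE : edg X -> edg Y; hF : fac X -> fac Y }.

Definition is_iso (X Y : pcx) (h : hom X Y) : Prop :=
  bijective (hV h) /\ bijective (hE h) /\ bijective (hF h) /\
  (forall f i, corner (hF h f) i = hV h (corner f i)) /\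
  (forall f i, side (hF h f) i = hE h (side f i)) /\
  (forall e, ends (hE h e) = (hV h (ends e).1, hV h (ends e).2) \/
             ends (hE h e) = (hV h (ends e).2, hV h (ends e).1)).

Definition om_map (X Y : pcx) (h : hom X Y) : hom (om X) (om Y) :=
  @Hom (om X) (om Y) (fun v : ovtx X => match v with
                | OV v => OV (hV h v) | OM e => OM (hE h e)
                | OC f i => OC (hF h f) i end)
      (fun e : oedg X => match e with
                | OH e b => OH (hE h e) b | OS f i => OS (hF h f) i
                | OR f i => OR (hF h f) i end)
      (fun F : ofac X => match F with
                | OZ f => OZ (hF h f) | OP f i => OP (hF h f) i end).

Definition K0 : pcx :=
  @PCX 'I_5 'I_5 unit (fun e => (e, succ5 e)) (fun _ i => i) (fun _ i => i)
       (fun _ _ => true).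

Fixpoint Kn (n : nat) : pcx := match n with 0 => K0 | n'.+1 => om (Kn n') end.

(* K_0 onto the central face of omega(K_0), label-preservingly:
   v_i |-> c_{i-1}, edge v_i v_{i+1} |-> c_{i-1} c_i. *)
Definition iota0 : hom K0 (om K0) :=
  @Hom K0 (om K0) (fun i : 'I_5 => OC (tt : fac K0) (pred5 i))
      (fun i : 'I_5 => OR (tt : fac K0) (pred5 i))
      (fun _ => OZ (tt : fac K0)).

Fixpoint iota (n : nat) : hom (Kn n) (Kn n.+1) :=
  match n with 0 => iota0 | n'.+1 => om_map (iota n') end.

Fixpoint upV (n k : nat) (x : vtx (Kn n)) : vtx (Kn (k + n)) :=
  match k with 0 => x | k'.+1 => hV (iota (k' + n)) (upV k' x) end.
Fixpoint upE (n k : nat) (x : edg (Kn n)) : edg (Kn (k + n)) :=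
  match k with 0 => x | k'.+1 => hE (iota (k' + n)) (upE k' x) end.
Fixpoint upF (n k : nat) (x : fac (Kn n)) : fac (Kn (k + n)) :=
  match k with 0 => x | k'.+1 => hF (iota (k' + n)) (upF k' x) end.

(* Direct limit: disjoint union of the K_n modulo identification along iota *)
Definition quot (T : Type) (R : T -> T -> Prop) : Type :=
  {P : T -> Prop | exists x, P = R x}.
Definition cls (T : Type) (R : T -> T -> Prop) (x : T) : quot R :=
  exist _ (R x) (ex_intro _ x erefl).
Definition rep (T : Type) (R : T -> T -> Prop) (q : quot R) : T :=
  proj1_sig (constructive_indefinite_description _ (proj2_sig q)).

Definition SV := {n : nat & vtx (Kn n)}.
Definition SE := {n : nat & edg (Kn n)}.
Definition SF := {n : nat & fac (Kn n)}.

Definition RV (x y : SV) : Prop := exists k l,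
  existT (fun n => vtx (Kn n)) (k + projT1 x) (upV k (projT2 x)) =
  existT (fun n => vtx (Kn n)) (l + projT1 y) (upV l (projT2 y)).
Definition RE (x y : SE) : Prop := exists k l,
  existT (fun n => edg (Kn n)) (k + projT1 x) (upE k (projT2 x)) =
  existT (fun n => edg (Kn n)) (l + projT1 y) (upE l (projT2 y)).
Definition RF (x y : SF) : Prop := exists k l,
  existT (fun n => fac (Kn n)) (k + projT1 x) (upF k (projT2 x)) =
  existT (fun n => fac (Kn n)) (l + projT1 y) (upF l (projT2 y)).

Definition clsV (n : nat) (x : vtx (Kn n)) : quot RV := cls RV (existT _ n x).
Definition clsE (n : nat) (x : edg (Kn n)) : quot RE := cls RE (existT _ n x).

Definition K_ends (e : quot RE) : quot RV * quot RV :=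
  let: existT n x := rep e in
  (clsV (ends x).1, clsV (ends x).2).
Definition K_corner (f : quot RF) (i : 'I_5) : quot RV :=
  let: existT n x := rep f in clsV (corner x i).
Definition K_side (f : quot RF) (i : 'I_5) : quot RE :=
  let: existT n x := rep f in clsE (side x i).
Definition K_sdir (f : quot RF) (i : 'I_5) : bool :=
  let: existT n x := rep f in sdir x i.

Definition K : pcx := @PCX (quot RV) (quot RE) (quot RF) K_ends K_corner K_side K_sdir.

(* Since omega commutes with direct limits, omega(K) is the limit of the chain
   omega(K_n) = K_(n+1), that is K itself; [phi] realises this isomorphism.

   For the pointed statement only the 1-skeleton matters.  In omega(X) the centre vertices c_i
   have degree 3, a midpoint has degree at least 4 and is adjacent to some c_i, and every
   neighbour of an old vertex is a midpoint.  So the old vertices are exactly those without a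
   neighbour of degree 3, and two old vertices are adjacent in X iff they are distinct and have
   a common neighbour in omega(X).  Hence a graph isomorphism h : omega(K) -> K with h(v) = v
   forces v = phi(v') for an old vertex v', and phi^-1 o h restricts to an automorphism g of K
   with g(v) = v'; then g o phi : omega(K) -> K sends v' to v'.  The number of subdivisions a
   vertex of K has survived as an old vertex is finite and drops by one at each such step. *)

From Stdlib Require Import ClassicalEpsilon FunctionalExtensionality PropExtensionality.
From Stdlib Require Import ProofIrrelevance Eqdep_dec PeanoNat.
From mathcomp Require Import all_boot.
Set Implicit Arguments. Unset Strict Implicit. Unset Printing Implicit Defensive.

(** * Quotients and direct limits *)

Section Quotient.
Variables (A : Type) (R : A -> A -> Prop).
Hypotheses (R_refl : forall x, R x x) (R_sym : forall x y, R x y -> R y x)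
  (R_trans : forall x y z, R x y -> R y z -> R x z).

Lemma cls_eq x y : cls R x = cls R y <-> R x y.
Proof.
split=> [/(congr1 (@proj1_sig _ _)) /= -> | Rxy]; first exact: R_refl.
apply: eq_sig_hprop => [P p q|/=]; first exact: proof_irrelevance.
apply: functional_extensionality => z; apply: propositional_extensionality.
by split; [apply: R_trans; exact: R_sym | exact: R_trans].
Qed.

Lemma cls_rep q : cls R (rep q) = q.
Proof.
rewrite /rep; case: (constructive_indefinite_description _ _) => x /= E.
case: q E => P [y Hy] /= E; apply: eq_sig_hprop => [P' p q|/=]; last by rewrite E.
exact: proof_irrelevance.
Qed.

Lemma rep_cls x : R x (rep (cls R x)).
Proof. by apply/cls_eq; rewrite cls_rep. Qed.
End Quotient.

Section DirectLimit.
Variables (T : nat -> Type) (io : forall n, T n -> T n.+1).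

Fixpoint up (n k : nat) (x : T n) : T (k + n) :=
  match k with 0 => x | k'.+1 => @io (k' + n) (up k' x) end.

Definition shift (k : nat) (X : {n & T n}) : {n & T n} :=
  existT T (k + projT1 X) (up k (projT2 X)).
Definition shift1 (X : {n & T n}) : {n & T n} := existT T (projT1 X).+1 (io (projT2 X)).
Definition chain_eq (X Y : {n & T n}) : Prop := exists k l, shift k X = shift l Y.

Lemma shift0 X : shift 0 X = X. Proof. by case: X. Qed.

Lemma shift_shift j k X : shift j (shift k X) = shift (j + k) X.
Proof.
have shiftS i Y : shift i.+1 Y = shift1 (shift i Y) by [].
by elim: j => [|j IH]; rewrite ?shift0 // shiftS IH -shiftS addSn.
Qed.

Lemma chain_eq_refl X : chain_eq X X. Proof. by exists 0, 0. Qed.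

Lemma chain_eq_sym X Y : chain_eq X Y -> chain_eq Y X.
Proof. by case=> k [l E]; exists l, k. Qed.

Lemma chain_eq_trans X Y Z : chain_eq X Y -> chain_eq Y Z -> chain_eq X Z.
Proof.
case=> a [b E1] [c [d E2]]; exists (c + a), (b + d).
by rewrite -!shift_shift E1 !shift_shift addnC -shift_shift E2 shift_shift.
Qed.

Lemma chain_eq_shift1 X : chain_eq (shift1 X) X. Proof. by exists 0, 1; rewrite shift0. Qed.

Lemma shift_invariant (B : Type) (c : {n & T n} -> B) :
  (forall X, c (shift1 X) = c X) -> forall k X, c (shift k X) = c X.
Proof. by move=> Hc; elim=> [|k IH] X; rewrite ?shift0 // (Hc (shift k X)). Qed.

Lemma chain_eq_invariant (B : Type) (c : {n & T n} -> B) :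
  (forall X, c (shift1 X) = c X) -> forall X Y, chain_eq X Y -> c X = c Y.
Proof. by move=> Hc X Y [k [l E]]; rewrite -(shift_invariant Hc k X) E shift_invariant. Qed.

Lemma chain_eq_inj : (forall n, injective (@io n)) ->
  forall n (x y : T n), chain_eq (existT T n x) (existT T n y) -> x = y.
Proof.
move=> io_inj n x y [k [l E]].
have /eqP : k + n = l + n := congr1 (@projT1 _ _) E.
rewrite eqn_add2r => /eqP Ekl; subst l.
move: (inj_pair2_eq_dec nat Nat.eq_dec T _ _ _ E); clear E.
by elim: k => [//|k IH] /= /io_inj.
Qed.

Lemma cls_chain_eq X Y : cls chain_eq X = cls chain_eq Y <-> chain_eq X Y.
Proof. apply: cls_eq; [exact: chain_eq_refl|exact: chain_eq_sym|exact: chain_eq_trans]. Qed.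

Lemma cls_shift1 X : cls chain_eq (shift1 X) = cls chain_eq X.
Proof. exact/cls_chain_eq/chain_eq_shift1. Qed.

Lemma invariant_rep_cls (B : Type) (c : {n & T n} -> B) :
  (forall X, c (shift1 X) = c X) -> forall X, c (rep (cls chain_eq X)) = c X.
Proof.
move=> Hc X; apply/esym/(chain_eq_invariant Hc).
apply: rep_cls; [exact: chain_eq_refl|exact: chain_eq_sym|exact: chain_eq_trans].
Qed.
End DirectLimit.

(** * Subdivisions and the chain K_n *)

Ltac case_ord5 := let H := fresh in case=> [[|[|[|[|[|?]]]]] H] //; apply/val_inj.

Lemma succ5K : cancel succ5 pred5. Proof. by case_ord5. Qed.
Lemma pred5K : cancel pred5 succ5. Proof. by case_ord5. Qed.
Lemma pred5_inj : injective pred5. Proof. exact: can_inj pred5K. Qed.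
Lemma succ5_neq i : succ5 i <> i. Proof. by move: i; case_ord5. Qed.
Lemma succ5_neq_pred5 i : succ5 i <> pred5 i. Proof. by move: i; case_ord5. Qed.

Lemma rel5_id i : rel5 i i = 0. Proof. by move: i; case_ord5. Qed.
Lemma rel5_succ i : rel5 (succ5 i) i = 1. Proof. by move: i; case_ord5. Qed.
Lemma rel5_succ2 i : rel5 (succ5 (succ5 i)) i = 2. Proof. by move: i; case_ord5. Qed.
Lemma rel5_pred2 i : rel5 (pred5 (pred5 i)) i = 3. Proof. by move: i; case_ord5. Qed.
Lemma rel5_pred i : rel5 i (succ5 i) = 4. Proof. by move: i; case_ord5. Qed.

Definition strict_hom (X Y : pcx) (h : hom X Y) :=
  [/\ forall e, ends (hE h e) = (hV h (ends e).1, hV h (ends e).2),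
      forall f i, corner (hF h f) i = hV h (corner f i),
      forall f i, side (hF h f) i = hE h (side f i) &
      forall f i, sdir (hF h f) i = sdir f i].

Definition injective_hom (X Y : pcx) (h : hom X Y) :=
  [/\ injective (hV h), injective (hE h) & injective (hF h)].

Lemma strict_om_map (X Y : pcx) (h : hom X Y) : strict_hom h -> strict_hom (om_map h).
Proof.
case=> He Hc Hs Hd; split.
- by case=> [e [] |f i|f i] /=; rewrite ?He ?Hs.
- by case=> [f|f i] j //=; case: (rel5 j i) => [|[|[|[|?]]]] /=; rewrite ?Hc ?Hs.
- by case=> [f|f i] j //=; case: (rel5 j i) => [|[|[|[|?]]]] /=; rewrite ?Hs ?Hd.
- by case=> [f|f i] j.
Qed.

Lemma injective_om_map (X Y : pcx) (h : hom X Y) :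
  injective_hom h -> injective_hom (om_map h).
Proof.
case=> Iv Ie If; split.
- by case=> [a|a|a i] [b|b|b j] //= [] => [/Iv|/Ie|/If] -> //= ->.
- by case=> [a x|a x|a x] [b y|b y|b y] //= [] => [/Ie|/If|/If] -> ->.
- by case=> [a|a x] [b|b y] //= [] => [/If|/If] -> //= ->.
Qed.

Definition loopless (X : pcx) := forall e : edg X, (ends e).1 <> (ends e).2.
Definition two_sided (X : pcx) := forall e : edg X, exists f i g j,
  [/\ side f i = e, side g j = e & (f <> g \/ i <> j)].

Lemma OR_two_sides (X : pcx) (f : fac X) i :
  exists (F G : ofac X) j k, [/\ om_side F j = OR f i, om_side G k = OR f i & F <> G].
Proof.
exists (OZ f), (OP f (succ5 i)), (succ5 i), (succ5 (succ5 (succ5 i))); split=> //=.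
  by rewrite succ5K.
by rewrite rel5_succ2 succ5K.
Qed.

Lemma OS_two_sides (X : pcx) (f : fac X) i :
  exists (F G : ofac X) j k, [/\ om_side F j = OS f i, om_side G k = OS f i & F <> G].
Proof.
exists (OP f i), (OP f (succ5 i)), (succ5 i), (pred5 (pred5 (succ5 i))); split=> /=.
- by rewrite rel5_succ.
- by rewrite rel5_pred2 succ5K.
- move=> E; apply: (@succ5_neq i).
  exact: (congr1 (fun F : ofac X => if F is OP _ k then k else i) (esym E)).
Qed.

Lemma OH_side (X : pcx) (f : fac X) i b :
  exists F : ofac X, om_side F i = OH (side f i) b /\ (F = OP f i \/ F = OP f (succ5 i)).
Proof.
case Eb: (b == ~~ sdir f i).
  by exists (OP f i); split; [rewrite /= rel5_id (eqP Eb) | left].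
exists (OP f (succ5 i)); split; last by right.
by rewrite /= rel5_pred succ5K; congr OH; case: b (sdir f i) Eb => [] [].
Qed.

Lemma strict_iota n : strict_hom (iota n).
Proof.
elim: n => [|n IH]; last exact: strict_om_map.
by split=> //= e; rewrite pred5K succ5K.
Qed.

Lemma injective_iota n : injective_hom (iota n).
Proof.
elim: n => [|n IH]; last exact: injective_om_map.
split=> [a b E | a b E | [] []] //; apply: pred5_inj.
- exact: (congr1 (fun v : ovtx K0 => if v is OC _ i then i else a) E).
- exact: (congr1 (fun e : oedg K0 => if e is OR _ i then i else a) E).
Qed.

Lemma loopless_Kn n : loopless (Kn n).
Proof.
move=> e; case: n e => [|n] e /=; first by move/esym; apply: succ5_neq.
case: e => [e b|f i|f i] //= E; apply: (@succ5_neq i).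
exact: (congr1 (fun v : ovtx (Kn n) => if v is OC _ k then k else i) (esym E)).
Qed.

Lemma two_sided_iota n (x : edg (Kn n)) : exists (F G : fac (Kn n.+1)) i j,
  [/\ side F i = hE (iota n) x, side G j = hE (iota n) x & (F <> G \/ i <> j)].
Proof.
elim: n x => [|n IH] x.
  have [F [G [j [k [E1 E2 E3]]]]] := OR_two_sides (tt : fac K0) (pred5 x).
  by exists F, G, j, k; split; [exact: E1|exact: E2|left].
case: x => [e b|f i|f i].
- have [F [G [i [j [E1 E2 E3]]]]] := IH e.
  have [F' [HF' HF]] := OH_side F i b; have [G' [HG' HG]] := OH_side G j b.
  exists F', G', i, j; split; [by rewrite /= HF' E1 | by rewrite /= HG' E2 |].
  case: E3 => E3; [left => E; apply: E3 | by right].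
  by case: HF HG E => -> [] -> [].
- have [F [G [j [k [E1 E2 E3]]]]] := OS_two_sides (hF (iota n) f) i.
  by exists F, G, j, k; split; [exact: E1|exact: E2|left].
- have [F [G [j [k [E1 E2 E3]]]]] := OR_two_sides (hF (iota n) f) i.
  by exists F, G, j, k; split; [exact: E1|exact: E2|left].
Qed.

(** * The direct limit K *)

(* [RV], [RE] and [RF] are convertible to [chain_eq ioV], [chain_eq ioE] and [chain_eq ioF]. *)
Definition TV n := vtx (Kn n).
Definition TE n := edg (Kn n).
Definition TF n := fac (Kn n).
Definition ioV n : TV n -> TV n.+1 := hV (iota n).
Definition ioE n : TE n -> TE n.+1 := hE (iota n).
Definition ioF n : TF n -> TF n.+1 := hF (iota n).

Definition clsF n (x : fac (Kn n)) : quot RF := cls RF (existT _ n x).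

Lemma clsV_inj n : injective (@clsV n).
Proof.
move=> x y /(cls_chain_eq ioV); apply: chain_eq_inj => m.
by case: (injective_iota m).
Qed.

Lemma clsF_inj n : injective (@clsF n).
Proof.
move=> x y /(cls_chain_eq ioF); apply: chain_eq_inj => m.
by case: (injective_iota m).
Qed.

Lemma clsV_iota n (x : vtx (Kn n)) : clsV (hV (iota n) x) = clsV x.
Proof. exact: (cls_shift1 ioV (existT _ n x)). Qed.
Lemma clsE_iota n (x : edg (Kn n)) : clsE (hE (iota n) x) = clsE x.
Proof. exact: (cls_shift1 ioE (existT _ n x)). Qed.
Lemma clsF_iota n (x : fac (Kn n)) : clsF (hF (iota n) x) = clsF x.
Proof. exact: (cls_shift1 ioF (existT _ n x)). Qed.

Lemma clsV_surj (q : vtx K) : exists n (x : vtx (Kn n)), q = clsV x.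
Proof. by rewrite -(cls_rep q); case: (rep q) => n x; exists n, x. Qed.
Lemma clsE_surj (q : edg K) : exists n (x : edg (Kn n)), q = clsE x.
Proof. by rewrite -(cls_rep q); case: (rep q) => n x; exists n, x. Qed.
Lemma clsF_surj (q : fac K) : exists n (x : fac (Kn n)), q = clsF x.
Proof. by rewrite -(cls_rep q); case: (rep q) => n x; exists n, x. Qed.

Lemma corner_clsF n (f : fac (Kn n)) i : @corner K (clsF f) i = clsV (corner f i).
Proof.
apply: (@invariant_rep_cls TF ioF _ (fun Y => let: existT m g := Y in clsV (@corner (Kn m) g i))).
by case=> m g /=; rewrite -[RHS]clsV_iota; case: (strict_iota m) => _ <- _ _.
Qed.

Lemma side_clsF n (f : fac (Kn n)) i : @side K (clsF f) i = clsE (side f i).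
Proof.
apply: (@invariant_rep_cls TF ioF _ (fun Y => let: existT m g := Y in clsE (@side (Kn m) g i))).
by case=> m g /=; rewrite -[RHS]clsE_iota; case: (strict_iota m) => _ _ <- _.
Qed.

Lemma sdir_clsF n (f : fac (Kn n)) i : @sdir K (clsF f) i = sdir f i.
Proof.
apply: (@invariant_rep_cls TF ioF _ (fun Y => let: existT m g := Y in @sdir (Kn m) g i)).
by case=> m g /=; case: (strict_iota m) => _ _ _ <-.
Qed.

Lemma ends_clsE n (e : edg (Kn n)) : @ends K (clsE e) = (clsV (ends e).1, clsV (ends e).2).
Proof.
apply: (@invariant_rep_cls TE ioE _
  (fun Y => let: existT m x := Y in (clsV (@ends (Kn m) x).1, clsV (@ends (Kn m) x).2))).
by case=> m x /=; case: (strict_iota m) => He _ _ _; move: (He x) => /= ->; rewrite !clsV_iota.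
Qed.

Lemma loopless_K : loopless K.
Proof.
move=> e; case: (clsE_surj e) => n [x ->]; rewrite ends_clsE => /clsV_inj.
exact: loopless_Kn.
Qed.

Lemma two_sided_K : two_sided K.
Proof.
move=> e; case: (clsE_surj e) => n [x ->]; have [F [G [i [j [E1 E2 E3]]]]] := two_sided_iota x.
exists (clsF F), i, (clsF G), j; split.
- by rewrite side_clsF E1 clsE_iota.
- by rewrite side_clsF E2 clsE_iota.
- by case: E3 => [E3|]; [left => /clsF_inj | right].
Qed.

(** * The isomorphism omega(K) -> K *)

Definition phiV (v : vtx (om K)) : vtx K :=
  match v with
  | OV u => let: existT n x := rep u in clsV (OV x : vtx (Kn n.+1))
  | OM e => let: existT n x := rep e in clsV (OM x : vtx (Kn n.+1))
  | OC f i => let: existT n x := rep f in clsV (OC x i : vtx (Kn n.+1))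
  end.
Definition phiE (e : edg (om K)) : edg K :=
  match e with
  | OH e b => let: existT n x := rep e in clsE (OH x b : edg (Kn n.+1))
  | OS f i => let: existT n x := rep f in clsE (OS x i : edg (Kn n.+1))
  | OR f i => let: existT n x := rep f in clsE (OR x i : edg (Kn n.+1))
  end.
Definition phiF (f : fac (om K)) : fac K :=
  match f with
  | OZ f => let: existT n x := rep f in clsF (OZ x : fac (Kn n.+1))
  | OP f i => let: existT n x := rep f in clsF (OP x i : fac (Kn n.+1))
  end.
Definition phi : hom (om K) K := Hom phiV phiE phiF.

Lemma phiV_OV n (x : vtx (Kn n)) : phiV (OV (X:=K) (clsV x)) = clsV (OV x : vtx (Kn n.+1)).
Proof.
apply: (@invariant_rep_cls TV ioV _ (fun Y => let: existT m y := Y in clsV (OV y : vtx (Kn m.+1)))).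
by case=> m y; exact: (clsV_iota (OV y : vtx (Kn m.+1))).
Qed.
Lemma phiV_OM n (x : edg (Kn n)) : phiV (OM (X:=K) (clsE x)) = clsV (OM x : vtx (Kn n.+1)).
Proof.
apply: (@invariant_rep_cls TE ioE _ (fun Y => let: existT m y := Y in clsV (OM y : vtx (Kn m.+1)))).
by case=> m y; exact: (clsV_iota (OM y : vtx (Kn m.+1))).
Qed.
Lemma phiV_OC n (x : fac (Kn n)) i : phiV (OC (X:=K) (clsF x) i) = clsV (OC x i : vtx (Kn n.+1)).
Proof.
apply: (@invariant_rep_cls TF ioF _
  (fun Y => let: existT m y := Y in clsV (OC y i : vtx (Kn m.+1)))).
by case=> m y; exact: (clsV_iota (OC y i : vtx (Kn m.+1))).
Qed.
Lemma phiE_OH n (x : edg (Kn n)) b : phiE (OH (X:=K) (clsE x) b) = clsE (OH x b : edg (Kn n.+1)).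
Proof.
apply: (@invariant_rep_cls TE ioE _
  (fun Y => let: existT m y := Y in clsE (OH y b : edg (Kn m.+1)))).
by case=> m y; exact: (clsE_iota (OH y b : edg (Kn m.+1))).
Qed.
Lemma phiE_OS n (x : fac (Kn n)) i : phiE (OS (X:=K) (clsF x) i) = clsE (OS x i : edg (Kn n.+1)).
Proof.
apply: (@invariant_rep_cls TF ioF _
  (fun Y => let: existT m y := Y in clsE (OS y i : edg (Kn m.+1)))).
by case=> m y; exact: (clsE_iota (OS y i : edg (Kn m.+1))).
Qed.
Lemma phiE_OR n (x : fac (Kn n)) i : phiE (OR (X:=K) (clsF x) i) = clsE (OR x i : edg (Kn n.+1)).
Proof.
apply: (@invariant_rep_cls TF ioF _
  (fun Y => let: existT m y := Y in clsE (OR y i : edg (Kn m.+1)))).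
by case=> m y; exact: (clsE_iota (OR y i : edg (Kn m.+1))).
Qed.
Lemma phiF_OZ n (x : fac (Kn n)) : phiF (OZ (X:=K) (clsF x)) = clsF (OZ x : fac (Kn n.+1)).
Proof.
apply: (@invariant_rep_cls TF ioF _ (fun Y => let: existT m y := Y in clsF (OZ y : fac (Kn m.+1)))).
by case=> m y; exact: (clsF_iota (OZ y : fac (Kn m.+1))).
Qed.
Lemma phiF_OP n (x : fac (Kn n)) i : phiF (OP (X:=K) (clsF x) i) = clsF (OP x i : fac (Kn n.+1)).
Proof.
apply: (@invariant_rep_cls TF ioF _
  (fun Y => let: existT m y := Y in clsF (OP y i : fac (Kn m.+1)))).
by case=> m y; exact: (clsF_iota (OP y i : fac (Kn m.+1))).
Qed.

(* [psi] reads a cell of [K_n] inside [K_(n+1) = om (K_n)] as a cell of [om K]. *)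
Definition psiV_at n (x : vtx (Kn n)) : vtx (om K) :=
  match hV (iota n) x : ovtx (Kn n) with
  | OV y => OV (X:=K) (clsV y) | OM e => OM (X:=K) (clsE e) | OC f i => OC (X:=K) (clsF f) i
  end.
Definition psiE_at n (x : edg (Kn n)) : edg (om K) :=
  match hE (iota n) x : oedg (Kn n) with
  | OH e b => OH (X:=K) (clsE e) b | OS f i => OS (X:=K) (clsF f) i | OR f i => OR (X:=K) (clsF f) i
  end.
Definition psiF_at n (x : fac (Kn n)) : fac (om K) :=
  match hF (iota n) x : ofac (Kn n) with
  | OZ f => OZ (X:=K) (clsF f) | OP f i => OP (X:=K) (clsF f) i
  end.

Definition psiV (v : vtx K) : vtx (om K) := let: existT n x := rep v in psiV_at x.
Definition psiE (e : edg K) : edg (om K) := let: existT n x := rep e in psiE_at x.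
Definition psiF (f : fac K) : fac (om K) := let: existT n x := rep f in psiF_at x.

Lemma psiV_cls n (x : vtx (Kn n)) : psiV (clsV x) = psiV_at x.
Proof.
apply: (@invariant_rep_cls TV ioV _ (fun Y => let: existT m y := Y in psiV_at y)).
case=> m y; rewrite /= /psiV_at /ioV /=.
by case: (hV (iota m) y) => [z|e|f i] /=; rewrite ?clsV_iota ?clsE_iota ?clsF_iota.
Qed.
Lemma psiE_cls n (x : edg (Kn n)) : psiE (clsE x) = psiE_at x.
Proof.
apply: (@invariant_rep_cls TE ioE _ (fun Y => let: existT m y := Y in psiE_at y)).
case=> m y; rewrite /= /psiE_at /ioE /=.
by case: (hE (iota m) y) => [e b|f i|f i] /=; rewrite ?clsE_iota ?clsF_iota.
Qed.
Lemma psiF_cls n (x : fac (Kn n)) : psiF (clsF x) = psiF_at x.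
Proof.
apply: (@invariant_rep_cls TF ioF _ (fun Y => let: existT m y := Y in psiF_at y)).
case=> m y; rewrite /= /psiF_at /ioF /=.
by case: (hF (iota m) y) => [f|f i] /=; rewrite ?clsF_iota.
Qed.

Lemma psiV_phiV : cancel phiV psiV.
Proof.
case=> [u|u|u i]; [case: (clsV_surj u)|case: (clsE_surj u)|case: (clsF_surj u)] => n [x ->];
by rewrite ?phiV_OV ?phiV_OM ?phiV_OC psiV_cls /psiV_at /= ?clsV_iota ?clsE_iota ?clsF_iota.
Qed.
Lemma phiV_psiV : cancel psiV phiV.
Proof.
move=> v; case: (clsV_surj v) => n [x ->]; rewrite psiV_cls /psiV_at -[RHS]clsV_iota.
by case: (hV (iota n) x) => [y|e|f i]; rewrite ?phiV_OV ?phiV_OM ?phiV_OC.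
Qed.
Lemma psiE_phiE : cancel phiE psiE.
Proof.
case=> [u b|u i|u i]; [case: (clsE_surj u)|case: (clsF_surj u)|case: (clsF_surj u)] => n [x ->];
by rewrite ?phiE_OH ?phiE_OS ?phiE_OR psiE_cls /psiE_at /= ?clsE_iota ?clsF_iota.
Qed.
Lemma phiE_psiE : cancel psiE phiE.
Proof.
move=> e; case: (clsE_surj e) => n [x ->]; rewrite psiE_cls /psiE_at -[RHS]clsE_iota.
by case: (hE (iota n) x) => [y b|f i|f i]; rewrite ?phiE_OH ?phiE_OS ?phiE_OR.
Qed.
Lemma psiF_phiF : cancel phiF psiF.
Proof.
case=> [u|u i]; case: (clsF_surj u) => n [x ->];
by rewrite ?phiF_OZ ?phiF_OP psiF_cls /psiF_at /= ?clsF_iota.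
Qed.
Lemma phiF_psiF : cancel psiF phiF.
Proof.
move=> f; case: (clsF_surj f) => n [x ->]; rewrite psiF_cls /psiF_at -[RHS]clsF_iota.
by case: (hF (iota n) x) => [y|y i]; rewrite ?phiF_OZ ?phiF_OP.
Qed.

Lemma phi_corner F i : corner (phiF F) i = phiV (corner F i).
Proof.
case: F => [u|u j]; case: (clsF_surj u) => n [x ->].
  by rewrite phiF_OZ corner_clsF; cbn [om_corner corner om Kn]; rewrite phiV_OC.
rewrite phiF_OP corner_clsF; cbn [om_corner corner om Kn].
by case: (rel5 i j) => [|[|[|[|?]]]]; rewrite ?corner_clsF ?side_clsF ?phiV_OV ?phiV_OM ?phiV_OC.
Qed.
Lemma phi_side F i : side (phiF F) i = phiE (side F i).
Proof.
case: F => [u|u j]; case: (clsF_surj u) => n [x ->].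
  by rewrite phiF_OZ side_clsF; cbn [om_side side om Kn]; rewrite phiE_OR.
rewrite phiF_OP side_clsF; cbn [om_side side om Kn].
by case: (rel5 i j) => [|[|[|[|?]]]]; rewrite ?sdir_clsF ?side_clsF ?phiE_OH ?phiE_OS ?phiE_OR.
Qed.
Lemma phi_ends e : ends (phiE e) = (phiV (ends e).1, phiV (ends e).2).
Proof.
case: e => [u b|u i|u i]; [case: (clsE_surj u)|case: (clsF_surj u)|case: (clsF_surj u)] => n [x ->].
- rewrite phiE_OH ends_clsE; cbn [om_ends ends om Kn fst snd]; rewrite ends_clsE.
  by case: b; rewrite ?phiV_OV ?phiV_OM.
- rewrite phiE_OS ends_clsE; cbn [om_ends ends om Kn fst snd].
  by rewrite side_clsF phiV_OM phiV_OC.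
- by rewrite phiE_OR ends_clsE; cbn [om_ends ends om Kn fst snd]; rewrite !phiV_OC.
Qed.

Lemma phi_iso : is_iso phi.
Proof.
split; first by exists psiV; [exact: psiV_phiV|exact: phiV_psiV].
split; first by exists psiE; [exact: psiE_phiE|exact: phiE_psiE].
split; first by exists psiF; [exact: psiF_phiF|exact: phiF_psiF].
by split; [exact: phi_corner|split; [exact: phi_side|left; exact: phi_ends]].
Qed.

(** * Old vertices in the 1-skeleton of a subdivision *)

Definition adj (X : pcx) (x y : vtx X) := exists e : edg X, ends e = (x, y) \/ ends e = (y, x).
Definition trivalent (X : pcx) (y : vtx X) := exists a b c,
  [/\ a <> b, a <> c, b <> c, [/\ adj y a, adj y b & adj y c] &
      forall z, adj y z -> [\/ z = a, z = b | z = c]].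
Definition no_trivalent_nbr (X : pcx) (x : vtx X) := forall y, adj x y -> ~ trivalent y.
Definition common_nbr (X : pcx) (x y : vtx X) := exists z, adj x z /\ adj z y.
Definition graph_iso (X Y : pcx) (f : vtx X -> vtx Y) :=
  bijective f /\ forall x y, adj x y <-> adj (f x) (f y).

Lemma graph_iso_can (X Y : pcx) (f : vtx X -> vtx Y) (g : vtx Y -> vtx X) :
  graph_iso f -> cancel f g -> cancel g f -> graph_iso g.
Proof. by move=> [_ Hf] fK gK; split=> [|x y]; [exists f | rewrite Hf !gK]. Qed.

Lemma graph_iso_inv (X Y : pcx) (f : vtx X -> vtx Y) :
  graph_iso f -> exists g, [/\ graph_iso g, cancel f g & cancel g f].
Proof.
by move=> Hf; case: (Hf) => [[g fK gK] _]; exists g; split=> //; apply: graph_iso_can Hf fK gK.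
Qed.

Lemma graph_iso_comp (X Y Z : pcx) (f : vtx X -> vtx Y) (g : vtx Y -> vtx Z) :
  graph_iso f -> graph_iso g -> graph_iso (g \o f).
Proof. by move=> [bf Hf] [bg Hg]; split=> [|x y]; [exact: bij_comp | rewrite Hf Hg]. Qed.

Lemma is_iso_graph_iso (X Y : pcx) (h : hom X Y) : is_iso h -> graph_iso (hV h).
Proof.
case=> bV [[g _ gE] [_ [_ [_ He]]]]; split=> // x y; split.
  by case=> e [] Ee; exists (hE h e); case: (He e); rewrite Ee => ->; [left|right|right|left].
case=> e' Ee'; exists (g e'); move: (He (g e')) Ee'; rewrite gE.
case: (ends (g e')) => a b /= [] -> [] [/(bij_inj bV) -> /(bij_inj bV) ->];
  by [left|right|right|left].
Qed.

Section GraphIsoInvariants.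
Variables (X Y : pcx) (f : vtx X -> vtx Y).
Hypothesis f_iso : graph_iso f.

Let f_inj : injective f. Proof. by case: f_iso => /bij_inj. Qed.
Let f_surj y : exists x, y = f x.
Proof. by case: f_iso => [[g _ gK] _]; exists (g y); rewrite gK. Qed.
Let f_adj x y : adj x y <-> adj (f x) (f y). Proof. by case: f_iso. Qed.

Lemma graph_iso_trivalent y : trivalent y -> trivalent (f y).
Proof.
case=> a [b [c [ab ac bc [ya yb yc] Hy]]].
exists (f a), (f b), (f c); split; try by move/f_inj.
  by split; apply/f_adj.
move=> z; case: (f_surj z) => x -> /f_adj /Hy.
by case=> ->; [constructor 1|constructor 2|constructor 3].
Qed.

Lemma graph_iso_common_nbr x y : common_nbr x y -> common_nbr (f x) (f y).
Proof. by case=> z [xz zy]; exists (f z); split; apply/f_adj. Qed.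
End GraphIsoInvariants.

Lemma graph_iso_no_trivalent_nbr (X Y : pcx) (f : vtx X -> vtx Y) x :
  graph_iso f -> no_trivalent_nbr x -> no_trivalent_nbr (f x).
Proof.
move=> Hf Hx y xy ty; have [g [Hg fK _]] := graph_iso_inv Hf.
apply: (Hx (g y)) (graph_iso_trivalent Hg ty).
by rewrite -[x]fK; apply/(proj2 Hg).
Qed.

Lemma four_in_three (T : Type) (a b c p q r s : T) :
  p <> q -> p <> r -> p <> s -> q <> r -> q <> s -> r <> s ->
  [\/ p = a, p = b | p = c] -> [\/ q = a, q = b | q = c] ->
  [\/ r = a, r = b | r = c] -> [\/ s = a, s = b | s = c] -> False.
Proof. by move=> pq pr ps qr qs rs [] ? [] ? [] ? [] ?; subst; congruence. Qed.

Section OmGraph.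
Variable X : pcx.

Lemma adj_OV v y : adj (X := om X) (OV v) y ->
  exists e b, y = OM e /\ v = (if b then (ends e).2 else (ends e).1).
Proof. by case=> [[e b|f i|f i]] /= [] [] // <- <-; exists e, b. Qed.

Lemma adj_OC f i y : adj (X := om X) (OC f i) y ->
  [\/ y = OC f (succ5 i), y = OC f (pred5 i) | y = OM (side f i)].
Proof.
case=> [[e b|g j|g j]] /= [] [] //.
- by move=> <- -> ->; constructor 3.
- by move=> -> -> <-; constructor 1.
- by move=> <- -> <-; constructor 2; rewrite succ5K.
Qed.

Lemma trivalent_OC f i : trivalent (X := om X) (OC f i).
Proof.
exists (OC f (succ5 i)), (OC f (pred5 i)), (OM (side f i)); split=> //; last exact: adj_OC.
- move=> E; apply: (@succ5_neq_pred5 i).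
  exact: (congr1 (fun v : ovtx X => if v is OC _ k then k else i) E).
- split; first by exists (OR f i); left.
  + by exists (OR f (pred5 i)); right; rewrite /= pred5K.
  + by exists (OS f i); right.
Qed.

Hypotheses (X_loopless : loopless X) (X_two_sided : two_sided X).

(* A midpoint has at least four neighbours: the two ends of its edge and the centres of the
   two faces on either side. *)
Lemma not_trivalent_OM e : ~ trivalent (X := om X) (OM e).
Proof.
case: (X_two_sided e) => f [i [g [j [Ef Eg Hfg]]]] [a [b [c [ab ac bc _ Hnbr]]]].
apply: (@four_in_three _ a b c (OV (ends e).1) (OV (ends e).2) (OC f i) (OC g j)) => //.
- by case=> /X_loopless.
- by case; case: Hfg.
- by apply: Hnbr; exists (OH e false); right.
- by apply: Hnbr; exists (OH e true); right.
- by apply: Hnbr; exists (OS f i); left; rewrite /= Ef.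
- by apply: Hnbr; exists (OS g j); left; rewrite /= Eg.
Qed.

Lemma no_trivalent_nbrP x : no_trivalent_nbr (X := om X) x <-> exists u, x = OV u.
Proof.
split=> [|[u ->] y /adj_OV [e [b [-> _]]]]; last exact: not_trivalent_OM.
case: x => [v|e|f i] Hx; first by exists v.
- case: (X_two_sided e) => f [i [_ [_ [Ef _ _]]]].
  case: (Hx (OC f i)); last exact: trivalent_OC.
  by exists (OS f i); left; rewrite /= Ef.
- case: (Hx (OC f (succ5 i))); last exact: trivalent_OC.
  by exists (OR f i); left.
Qed.

Lemma adj_common_nbr u u' : adj u u' <-> u <> u' /\ common_nbr (X := om X) (OV u) (OV u').
Proof.
split.
  case=> e He; split.
    by move=> E; subst u'; move: (@X_loopless e); case: He => ->.
  exists (OM e); case: He => He; split.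
  - by exists (OH e false); left; rewrite /= He.
  - by exists (OH e true); right; rewrite /= He.
  - by exists (OH e true); left; rewrite /= He.
  - by exists (OH e false); right; rewrite /= He.
case=> neq [z [/adj_OV [e [b [-> Hu]]]]].
case=> [[e' b'|g j|g j]] /= [] [] // Hu' E'; subst e'; exists e.
rewrite Hu -Hu' {Hu Hu'} in neq *.
by case: (ends e) neq => p q; case: b; case: b' => /= neq; [case: neq|right|left|case: neq].
Qed.
End OmGraph.

Section OmGraphIso.
Variables X Y : pcx.
Hypotheses (X_loopless : loopless X) (X_two_sided : two_sided X).
Hypotheses (Y_loopless : loopless Y) (Y_two_sided : two_sided Y).

Lemma graph_iso_OV (f : vtx (om X) -> vtx (om Y)) :
  graph_iso f -> exists g, forall u, f (OV u) = OV (g u).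
Proof.
move=> Hf; have old u : exists w, f (OV u) = OV w.
  apply/(no_trivalent_nbrP Y_loopless Y_two_sided); apply: (graph_iso_no_trivalent_nbr Hf).
  by apply/(no_trivalent_nbrP X_loopless X_two_sided); exists u.
exists (fun u => proj1_sig (constructive_indefinite_description _ (old u))) => u.
exact: proj2_sig (constructive_indefinite_description _ (old u)).
Qed.

Lemma graph_iso_OV_adj (f : vtx (om X) -> vtx (om Y)) (g : vtx X -> vtx Y) :
  graph_iso f -> injective g -> (forall u, f (OV u) = OV (g u)) ->
  forall u u', adj u u' -> adj (g u) (g u').
Proof.
move=> Hf g_inj Hg u u' /(adj_common_nbr X_loopless) [neq nbr].
apply/(adj_common_nbr Y_loopless); split; first by move/g_inj.
by rewrite -!Hg; apply: (graph_iso_common_nbr Hf).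
Qed.
End OmGraphIso.

Lemma graph_iso_om_restrict (X Y : pcx) (f : vtx (om X) -> vtx (om Y)) :
  loopless X -> two_sided X -> loopless Y -> two_sided Y -> graph_iso f ->
  exists g, graph_iso g /\ forall u, f (OV u) = OV (g u).
Proof.
move=> lX tX lY tY Hf; have [f' [Hf' fK f'K]] := graph_iso_inv Hf.
have [g Hg] := graph_iso_OV lX tX lY tY Hf; have [g' Hg'] := graph_iso_OV lY tY lX tX Hf'.
have gK : cancel g g' by move=> u; move: (fK (OV u)); rewrite Hg Hg' => -[].
have g'K : cancel g' g by move=> w; move: (f'K (OV w)); rewrite Hg' Hg => -[].
exists g; split=> //; split=> [|u u']; first by exists g'.
split; first exact: (graph_iso_OV_adj lX lY Hf (can_inj gK) Hg).
by move/(graph_iso_OV_adj lY lX Hf' (can_inj g'K) Hg'); rewrite !gK.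
Qed.

(** * No pointed isomorphism *)

Fixpoint age (n : nat) : vtx (Kn n) -> nat :=
  match n return vtx (Kn n) -> nat with
  | 0 => fun _ => 0
  | n'.+1 => fun x : ovtx (Kn n') => if x is OV y then (age y).+1 else 0
  end.

Lemma age_iota n (x : vtx (Kn n)) : age (hV (iota n) x) = age x.
Proof. by elim: n x => [|n IH] // [y|e|f i] //; exact: (congr1 succn (IH y)). Qed.

Definition K_age (v : vtx K) : nat := let: existT n x := rep v in age x.

Lemma K_age_cls n (x : vtx (Kn n)) : K_age (clsV x) = age x.
Proof.
apply: (@invariant_rep_cls TV ioV _ (fun Y => let: existT m y := Y in age y)).
by case=> m y; exact: age_iota.
Qed.

Lemma K_age_phi u : K_age (phiV (OV u)) = (K_age u).+1.
Proof. by case: (clsV_surj u) => n [x ->]; rewrite phiV_OV !K_age_cls. Qed.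

Lemma graph_iso_phiV : graph_iso phiV. Proof. exact: is_iso_graph_iso phi_iso. Qed.

Lemma graph_iso_psiV : graph_iso psiV.
Proof. exact: graph_iso_can graph_iso_phiV psiV_phiV phiV_psiV. Qed.

Lemma K_no_fixed_OV (h : vtx (om K) -> vtx K) v : graph_iso h -> h (OV v) <> v.
Proof.
have [m Hm] : exists m, K_age v = m by exists (K_age v).
elim: m v h Hm => [|m IH] v h Hm Hh Hv.
all: have [g [Hg Hgh]] := graph_iso_om_restrict loopless_K two_sided_K loopless_K two_sided_K
       (graph_iso_comp Hh graph_iso_psiV).
all: have Ev : v = phiV (OV (g v)) by rewrite -Hgh phiV_psiV Hv.
  by rewrite Ev K_age_phi in Hm.
apply: (IH (g v) (g \o phiV)); first by move: Hm; rewrite {1}Ev K_age_phi => -[].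
  exact: graph_iso_comp graph_iso_phiV Hg.
by change (g (phiV (OV (g v))) = g v); rewrite -Ev.
Qed.

Theorem mainTheorem8 :
  (exists h : hom (om K) K, is_iso h) /\
  (forall v : vtx K,
     ~ exists h : hom (om K) K, is_iso h /\ hV h (OV (X:=K) v) = v).
Proof.
split; first by exists phi; exact: phi_iso.
move=> v [h [Hh Hv]].
exact: K_no_fixed_OV (is_iso_graph_iso Hh) Hv.
Qed.
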